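(* Let $\alpha$ be a nonzero real number and let $\gamma(t)=\Psi(u(t),v(t))$ be a regular curve in $\mathbb S^2$ not passing through $N$. Then $\gamma$ is an $\alpha$-stationary curve if and only if its curvature satisfies $$\kappa=\alpha\,\frac{\langle\mathbf n,\xi\rangle}{\mathsf d}.$$ Here $\mathbf n$ is the unit normal of $\gamma$, $\mathsf d$ is the spherical distance from $\gamma(t)$ to $N$, and $\xi$ is the unit tangent vector at $\gamma(t)$ of the minimizing geodesic joining $N$ and $\gamma(t)$.
   Context: $\mathbb S^2\subset\mathbb R^3$ is the unit sphere with the Euclidean inner product $\langle,\rangle$. It is parametrized by $\Psi(u,v)=(\sin u\cos v,\sin u\sin v,\cos u)$, and $N=(0,0,1)$. The spherical distance from $\Psi(u,v)$, $u\in[0,\pi]$, to $N$ is $u$. For $p=\Psi(u,v)$ with $0<u<\pi$, set $\xi(p)=\Psi_u(u,v)=(\cos u\cos v,\cos u\sin v,-\sin u)$; this is the unit tangent of the minimizing geodesic from $N$ to $p$, pointing away from $N$. For a regular curve $\gamma(t)=\Psi(u(t),v(t))$, we have $|\gamma'|=\sqrt{u'^2+\sin^2(u)v'^2}$. Its unit normal is $\mathbf n=(\gamma'\times\gamma)/|\gamma'|$, with $\times$ the Euclidean cross product. Its curvature is $$\kappa=\frac{\langle\gamma'',\mathbf n\rangle}{|\gamma'|^2}=\frac{\det(\gamma'',\gamma',\gamma)}{|\gamma'|^3}.$$ The energy is $$E_\alpha[\gamma]=\int_\gamma\mathsf d^\alpha ds=\int u^\alpha\sqrt{u'^2+\sin^2(u)v'^2}\,dt.$$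 The curve is $\alpha$-stationary if it is a critical point of $E_\alpha$, i.e. $(u,v)$ satisfies its Euler–Lagrange equations. Throughout the paper, $\alpha\neq0$ and curves avoid $N$. *)

From Stdlib Require Import Reals Lra.
From Coquelicot Require Import Coquelicot.
Open Scope R_scope.

Definition vec3 := (R * R * R)%type.
Definition vx (a : vec3) : R := fst (fst a).
Definition vy (a : vec3) : R := snd (fst a).
Definition vz (a : vec3) : R := snd a.
Definition mk3 (x y z : R) : vec3 := (x, y, z).

Definition dot3 (a b : vec3) : R := vx a * vx b + vy a * vy b + vz a * vz b.
Definition cross3 (a b : vec3) : vec3 :=
  mk3 (vy a * vz b - vz a * vy b)
      (vz a * vx b - vx a * vz b)
      (vx a * vy b - vy a * vx b).
Definition norm3 (a : vec3) : R := sqrt (dot3 a a).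
Definition scal3 (c : R) (a : vec3) : vec3 := mk3 (c * vx a) (c * vy a) (c * vz a).

(* Parametrization of S^2 and the field xi = Psi_u. *)
Definition Psi (u v : R) : vec3 := mk3 (sin u * cos v) (sin u * sin v) (cos u).
Definition Psi_u (u v : R) : vec3 := mk3 (cos u * cos v) (cos u * sin v) (- sin u).

Definition dcurve (g : R -> vec3) (t : R) : vec3 :=
  mk3 (Derive (fun s => vx (g s)) t)
      (Derive (fun s => vy (g s)) t)
      (Derive (fun s => vz (g s)) t).

Definition curve (u v : R -> R) (t : R) : vec3 := Psi (u t) (v t).
Definition vel (u v : R -> R) (t : R) : vec3 := dcurve (curve u v) t.
Definition acc (u v : R -> R) (t : R) : vec3 := dcurve (vel u v) t.

Definition unit_normal (u v : R -> R) (t : R) : vec3 :=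
  scal3 (/ norm3 (vel u v t)) (cross3 (vel u v t) (curve u v t)).

Definition curvature (u v : R -> R) (t : R) : R :=
  dot3 (acc u v t) (unit_normal u v t) / (norm3 (vel u v t)) ^ 2.

Definition xi_along (u v : R -> R) (t : R) : vec3 := Psi_u (u t) (v t).

(* spherical distance from Psi(u,v) to N, for u in [0,pi], is u *)
Definition dist_N (u v : R -> R) (t : R) : R := u t.

(* Lagrangian of E_alpha in coordinates (u, v, u', v'). *)
Definition Lag (alpha : R) (x1 x2 y1 y2 : R) : R :=
  Rpower x1 alpha * sqrt (y1 ^ 2 + (sin x1) ^ 2 * y2 ^ 2).

Definition L_u  alpha x1 x2 y1 y2 := Derive (fun s => Lag alpha s x2 y1 y2) x1.
Definition L_v  alpha x1 x2 y1 y2 := Derive (fun s => Lag alpha x1 s y1 y2) x2.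
Definition L_u' alpha x1 x2 y1 y2 := Derive (fun s => Lag alpha x1 x2 s y2) y1.
Definition L_v' alpha x1 x2 y1 y2 := Derive (fun s => Lag alpha x1 x2 y1 s) y2.

Definition stationary (alpha a b : R) (u v : R -> R) : Prop :=
  forall t, a < t < b ->
    is_derive (fun s => L_u' alpha (u s) (v s) (Derive u s) (Derive v s)) t
              (L_u alpha (u t) (v t) (Derive u t) (Derive v t)) /\
    is_derive (fun s => L_v' alpha (u s) (v s) (Derive u s) (Derive v s)) t
              (L_v alpha (u t) (v t) (Derive u t) (Derive v t)).

(* In the coordinates (u, v), |γ'|² = u'² + sin²u v'², det(γ'', γ', γ) = T(u, u', u'', v', v'')
   and ⟨γ' × γ, ξ⟩ = sin u v', so |γ'|³ (κ - α⟨n, ξ⟩/d) is the defect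
   Δ = T - α sin u v' |γ'|² / u.  Differentiating the momenta of the Lagrangian u^α |γ'| shows
   that the two Euler-Lagrange residuals are (u^α sin u / |γ'|³) v' Δ and -(u^α sin u / |γ'|³) u' Δ.
   As sin u ≠ 0 and (u', v') ≠ (0, 0), both residuals vanish exactly when Δ = 0. *)

From Stdlib Require Import Reals Lra Nsatz.
From Coquelicot Require Import Coquelicot.
Open Scope R_scope.

Ltac eta_reduce :=
  repeat match goal with
  | |- context [fun x : R => ?f x] => change (fun x : R => f x) with f
  end.

Lemma dot3_scal_l (k : R) (a b : vec3) : dot3 (scal3 k a) b = k * dot3 a b.
Proof. unfold dot3, scal3, mk3, vx, vy, vz; cbn [fst snd]; ring. Qed.

Lemma dot3_scal_r (k : R) (a b : vec3) : dot3 a (scal3 k b) = k * dot3 a b.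
Proof. unfold dot3, scal3, mk3, vx, vy, vz; cbn [fst snd]; ring. Qed.

Lemma forall_in_iff (D P Q : R -> Prop) :
  (forall t, D t -> (P t <-> Q t)) -> ((forall t, D t -> P t) <-> (forall t, D t -> Q t)).
Proof. intros PQ; split; intros H t Dt; apply PQ; auto. Qed.

Definition sq_speed (u0 u1 v1 : R) : R := u1 ^ 2 + sin u0 ^ 2 * v1 ^ 2.

(* [auto_derive] unfolds [x ^ 2] into [x * (x * 1)] under [sqrt]; fold it back. *)
Ltac fold_sqrt_as X :=
  repeat match goal with
  | |- context [sqrt ?e] => progress replace e with X by (unfold sq_speed; ring)
  end.

Section Lagrangian.
Variables (alpha x1 x2 y1 y2 : R).
Hypothesis speed_pos : 0 < sq_speed x1 y1 y2.

Let sqrt_speed_neq0 : sqrt (sq_speed x1 y1 y2) <> 0.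
Proof. apply Rgt_not_eq, sqrt_lt_R0, speed_pos. Qed.

Lemma L_u'_eq :
  L_u' alpha x1 x2 y1 y2 = Rpower x1 alpha * y1 / sqrt (sq_speed x1 y1 y2).
Proof.
unfold L_u', Lag; apply is_derive_unique; auto_derive.
- unfold sq_speed in speed_pos; lra.
- fold_sqrt_as (sq_speed x1 y1 y2); field; exact sqrt_speed_neq0.
Qed.

Lemma L_v'_eq :
  L_v' alpha x1 x2 y1 y2 = Rpower x1 alpha * sin x1 ^ 2 * y2 / sqrt (sq_speed x1 y1 y2).
Proof.
unfold L_v', Lag; apply is_derive_unique; auto_derive.
- unfold sq_speed in speed_pos; lra.
- fold_sqrt_as (sq_speed x1 y1 y2); field; exact sqrt_speed_neq0.
Qed.

Lemma L_u_eq : 0 < x1 ->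
  L_u alpha x1 x2 y1 y2 = Rpower x1 alpha *
    (alpha / x1 * sqrt (sq_speed x1 y1 y2) + sin x1 * cos x1 * y2 ^ 2 / sqrt (sq_speed x1 y1 y2)).
Proof.
intros x1_pos; unfold L_u, Lag, Rpower; apply is_derive_unique; auto_derive.
- unfold sq_speed in speed_pos; lra.
- fold_sqrt_as (sq_speed x1 y1 y2); field; split; [exact sqrt_speed_neq0 | lra].
Qed.
End Lagrangian.

Lemma L_v_eq (alpha x1 x2 y1 y2 : R) : L_v alpha x1 x2 y1 y2 = 0.
Proof. unfold L_v, Lag; apply Derive_const. Qed.

Definition vel_coord (u0 v0 u1 v1 : R) : vec3 :=
  mk3 (cos u0 * cos v0 * u1 - sin u0 * sin v0 * v1)
      (cos u0 * sin v0 * u1 + sin u0 * cos v0 * v1)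
      (- sin u0 * u1).

(* u'' Ψ_u + v'' Ψ_v + u'² Ψ_uu + 2 u'v' Ψ_uv + v'² Ψ_vv *)
Definition acc_coord (u0 v0 u1 v1 u2 v2 : R) : vec3 :=
  mk3 (cos u0 * cos v0 * u2 - sin u0 * sin v0 * v2
         - sin u0 * cos v0 * (u1 ^ 2 + v1 ^ 2) - 2 * cos u0 * sin v0 * u1 * v1)
      (cos u0 * sin v0 * u2 + sin u0 * cos v0 * v2
         - sin u0 * sin v0 * (u1 ^ 2 + v1 ^ 2) + 2 * cos u0 * cos v0 * u1 * v1)
      (- sin u0 * u2 - cos u0 * u1 ^ 2).

Definition triple_coord (u0 u1 u2 v1 v2 : R) : R :=
  sin u0 * (v1 * u2 - u1 * v2) - sin u0 ^ 2 * cos u0 * v1 ^ 3 - 2 * cos u0 * u1 ^ 2 * v1.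

(* [nsatz] only reifies products, hence [simpl pow]. *)
Ltac sphere_identity u0 v0 :=
  unfold dot3, cross3, sq_speed, triple_coord, vel_coord, acc_coord, Psi, Psi_u, mk3, vx, vy, vz;
  cbn [fst snd];
  pose proof (sin2_cos2 u0); pose proof (sin2_cos2 v0); unfold Rsqr in *; simpl pow; nsatz.

Section CoordinateIdentities.
Variables (u0 v0 u1 v1 u2 v2 : R).

Lemma dot_vel_coord : dot3 (vel_coord u0 v0 u1 v1) (vel_coord u0 v0 u1 v1) = sq_speed u0 u1 v1.
Proof. sphere_identity u0 v0. Qed.

Lemma dot_acc_cross_vel_coord :
  dot3 (acc_coord u0 v0 u1 v1 u2 v2) (cross3 (vel_coord u0 v0 u1 v1) (Psi u0 v0))
  = triple_coord u0 u1 u2 v1 v2.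
Proof. sphere_identity u0 v0. Qed.

Lemma dot_cross_vel_coord_Psi_u :
  dot3 (cross3 (vel_coord u0 v0 u1 v1) (Psi u0 v0)) (Psi_u u0 v0) = sin u0 * v1.
Proof. sphere_identity u0 v0. Qed.
End CoordinateIdentities.

Lemma vel_eq (u v : R -> R) (t : R) : ex_derive u t -> ex_derive v t ->
  vel u v t = vel_coord (u t) (v t) (Derive u t) (Derive v t).
Proof.
intros du dv; unfold vel, dcurve, curve, Psi, vel_coord, mk3, vx, vy, vz; cbn [fst snd].
f_equal; [f_equal|];
  (apply is_derive_unique; auto_derive; [repeat split; auto | eta_reduce; ring]).
Qed.

Lemma norm_vel (u v : R -> R) (t : R) : ex_derive u t -> ex_derive v t ->
  norm3 (vel u v t) = sqrt (sq_speed (u t) (Derive u t) (Derive v t)).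
Proof. intros du dv; unfold norm3; rewrite vel_eq, dot_vel_coord by assumption; reflexivity. Qed.

Lemma sq_speed_pos_of_regular (u v : R -> R) (t : R) :
  ex_derive u t -> ex_derive v t -> norm3 (vel u v t) <> 0 ->
  0 < sq_speed (u t) (Derive u t) (Derive v t).
Proof.
intros du dv regular; rewrite norm_vel in regular by assumption.
assert (nonneg : 0 <= sq_speed (u t) (Derive u t) (Derive v t)) by (unfold sq_speed; nra).
destruct nonneg as [pos | zero]; [exact pos |].
rewrite <- zero, sqrt_0 in regular; contradiction.
Qed.

Lemma dot_unit_normal_xi (u v : R -> R) (t : R) : ex_derive u t -> ex_derive v t ->
  dot3 (unit_normal u v t) (xi_along u v t)
  = sin (u t) * Derive v t / sqrt (sq_speed (u t) (Derive u t) (Derive v t)).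
Proof.
intros du dv; unfold unit_normal, xi_along, curve.
rewrite dot3_scal_l, norm_vel, vel_eq, dot_cross_vel_coord_Psi_u by assumption.
unfold Rdiv; ring.
Qed.

Definition stationarity_defect (alpha u0 u1 u2 v1 v2 : R) : R :=
  triple_coord u0 u1 u2 v1 v2 - alpha * sin u0 * v1 * sq_speed u0 u1 v1 / u0.

Lemma eq0_of_mul_coords_eq0 (k u0 u1 v1 d : R) :
  k <> 0 -> 0 < sq_speed u0 u1 v1 -> k * v1 * d = 0 -> k * u1 * d = 0 -> d = 0.
Proof.
intros k_neq0 speed_pos zero_v zero_u.
destruct (Req_dec d 0) as [zero | d_neq0]; [exact zero | exfalso].
assert (cancel : forall x, k * x * d = 0 -> x = 0).
{ intros x H; replace x with (k * x * d / (k * d)) by (field; auto); rewrite H; unfold Rdiv; ring. }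
apply cancel in zero_v; apply cancel in zero_u; unfold sq_speed in speed_pos; subst; lra.
Qed.

(* Proves a rational identity involving [sqrt q] by treating [sqrt q] as an unknown [w]
   subject only to [w ^ 2 = q] and [w <> 0]. *)
Ltac field_with_sqrt q q_pos :=
  fold_sqrt_as q;
  let w := fresh "w" in let w_sq := fresh "w_sq" in let w_neq0 := fresh "w_neq0" in
  pose proof (pow2_sqrt q (Rlt_le _ _ q_pos)) as w_sq;
  pose proof (Rgt_not_eq _ _ (sqrt_lt_R0 q q_pos)) as w_neq0;
  revert w_sq w_neq0; generalize (sqrt q); intros w w_sq w_neq0;
  unfold sq_speed in *;
  field_simplify_eq; [simpl pow in *; nsatz | repeat split; assumption || lra].

Section AlongCurve.
Variables (alpha : R) (u v : R -> R) (t : R).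
Hypothesis near_derivable : locally t (fun s => ex_derive u s /\ ex_derive v s).
Hypothesis derivable2_u : ex_derive (Derive u) t.
Hypothesis derivable2_v : ex_derive (Derive v) t.
Hypothesis near_regular : locally t (fun s => 0 < sq_speed (u s) (Derive u s) (Derive v s)).
Hypothesis in_chart : 0 < u t < PI.

Let derivable_u : ex_derive u t := proj1 (locally_singleton _ _ near_derivable).
Let derivable_v : ex_derive v t := proj2 (locally_singleton _ _ near_derivable).
Let regular : 0 < sq_speed (u t) (Derive u t) (Derive v t) := locally_singleton _ _ near_regular.
Let W := sqrt (sq_speed (u t) (Derive u t) (Derive v t)).
Let W_pos : 0 < W := sqrt_lt_R0 _ regular.
Let defect :=
  stationarity_defect alpha (u t) (Derive u t) (Derive (Derive u) t) (Derive v t) (Derive (Derive v) t).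

Lemma acc_eq : acc u v t
  = acc_coord (u t) (v t) (Derive u t) (Derive v t) (Derive (Derive u) t) (Derive (Derive v) t).
Proof.
assert (acc_vel_coord :
  acc u v t = dcurve (fun s => vel_coord (u s) (v s) (Derive u s) (Derive v s)) t).
{ unfold acc, dcurve; f_equal; apply Derive_ext_loc;
    generalize near_derivable; apply filter_imp; intros s [du dv]; now rewrite vel_eq. }
rewrite acc_vel_coord; unfold dcurve, vel_coord, acc_coord, mk3, vx, vy, vz; cbn [fst snd].
f_equal; [f_equal|];
  (apply is_derive_unique; auto_derive; [repeat split; auto | eta_reduce; ring]).
Qed.

Lemma curvature_eq : curvature u v t = triple_coord (u t) (Derive u t) (Derive (Derive u) t)
                                         (Derive v t) (Derive (Derive v) t) / W ^ 3.
Proof.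
unfold curvature, unit_normal, curve.
rewrite dot3_scal_r, norm_vel, acc_eq, vel_eq, dot_acc_cross_vel_coord by assumption.
fold W; field; apply Rgt_not_eq, W_pos.
Qed.

Lemma defect_eq_curvature_gap :
  defect = W ^ 3 * (curvature u v t - alpha * dot3 (unit_normal u v t) (xi_along u v t) / dist_N u v t).
Proof.
rewrite curvature_eq, dot_unit_normal_xi by assumption; fold W.
unfold dist_N, defect, stationarity_defect.
rewrite <- (pow2_sqrt _ (Rlt_le _ _ regular)); fold W.
field; split; [apply Rgt_not_eq, W_pos | lra].
Qed.

Lemma curvature_equation_iff_defect_eq0 :
  curvature u v t = alpha * dot3 (unit_normal u v t) (xi_along u v t) / dist_N u v t
  <-> defect = 0.
Proof.
rewrite defect_eq_curvature_gap; split; intros H.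
- rewrite H; ring.
- destruct (Rmult_integral _ _ H) as [W3_eq0 | gap_eq0]; [| lra].
  exfalso; revert W3_eq0; apply pow_nonzero, Rgt_not_eq, W_pos.
Qed.

Lemma is_derive_momentum_u :
  is_derive (fun s => L_u' alpha (u s) (v s) (Derive u s) (Derive v s)) t
    (L_u alpha (u t) (v t) (Derive u t) (Derive v t)
     + Rpower (u t) alpha * sin (u t) / W ^ 3 * Derive v t * defect).
Proof.
apply (is_derive_ext_loc
  (fun s => Rpower (u s) alpha * Derive u s / sqrt (sq_speed (u s) (Derive u s) (Derive v s)))).
{ generalize near_regular; apply filter_imp; intros s Hs; symmetry; apply L_u'_eq, Hs. }
rewrite L_u_eq by (exact regular || lra).
pose proof regular as speed_pos; unfold sq_speed in speed_pos.
unfold defect, stationarity_defect, triple_coord, W, Rpower, sq_speed.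
auto_derive.
{ repeat split; auto; try lra; apply Rgt_not_eq, sqrt_lt_R0; lra. }
eta_reduce; field_with_sqrt (sq_speed (u t) (Derive u t) (Derive v t)) regular.
Qed.

Lemma is_derive_momentum_v :
  is_derive (fun s => L_v' alpha (u s) (v s) (Derive u s) (Derive v s)) t
    (L_v alpha (u t) (v t) (Derive u t) (Derive v t)
     - Rpower (u t) alpha * sin (u t) / W ^ 3 * Derive u t * defect).
Proof.
apply (is_derive_ext_loc (fun s => Rpower (u s) alpha * sin (u s) ^ 2 * Derive v s
                                     / sqrt (sq_speed (u s) (Derive u s) (Derive v s)))).
{ generalize near_regular; apply filter_imp; intros s Hs; symmetry; apply L_v'_eq, Hs. }
rewrite L_v_eq.
pose proof regular as speed_pos; unfold sq_speed in speed_pos.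
unfold defect, stationarity_defect, triple_coord, W, Rpower, sq_speed.
auto_derive.
{ repeat split; auto; try lra; apply Rgt_not_eq, sqrt_lt_R0; lra. }
eta_reduce; field_with_sqrt (sq_speed (u t) (Derive u t) (Derive v t)) regular.
Qed.

Lemma euler_lagrange_iff_defect_eq0 :
  is_derive (fun s => L_u' alpha (u s) (v s) (Derive u s) (Derive v s)) t
            (L_u alpha (u t) (v t) (Derive u t) (Derive v t)) /\
  is_derive (fun s => L_v' alpha (u s) (v s) (Derive u s) (Derive v s)) t
            (L_v alpha (u t) (v t) (Derive u t) (Derive v t))
  <-> defect = 0.
Proof.
pose proof is_derive_momentum_u as momentum_u; pose proof is_derive_momentum_v as momentum_v.
set (k := Rpower (u t) alpha * sin (u t) / W ^ 3) in momentum_u, momentum_v.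
split.
- intros [EL_u EL_v].
  apply (eq0_of_mul_coords_eq0 k (u t) (Derive u t) (Derive v t)); [| exact regular | |].
  + unfold k, Rpower, Rdiv; apply Rgt_not_eq, Rmult_lt_0_compat.
    * apply Rmult_lt_0_compat; [apply exp_pos | apply sin_gt_0; lra].
    * apply Rinv_0_lt_compat, pow_lt, W_pos.
  + apply is_derive_unique in EL_u; rewrite (is_derive_unique _ _ _ momentum_u) in EL_u; lra.
  + apply is_derive_unique in EL_v; rewrite (is_derive_unique _ _ _ momentum_v) in EL_v; lra.
- intros zero; rewrite zero, Rmult_0_r in momentum_u, momentum_v.
  rewrite Rplus_0_r in momentum_u; rewrite Rminus_0_r in momentum_v; split; assumption.
Qed.

Lemma euler_lagrange_iff_curvature_equation :
  is_derive (fun s => L_u' alpha (u s) (v s) (Derive u s) (Derive v s)) t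
            (L_u alpha (u t) (v t) (Derive u t) (Derive v t)) /\
  is_derive (fun s => L_v' alpha (u s) (v s) (Derive u s) (Derive v s)) t
            (L_v alpha (u t) (v t) (Derive u t) (Derive v t))
  <-> curvature u v t = alpha * dot3 (unit_normal u v t) (xi_along u v t) / dist_N u v t.
Proof. rewrite euler_lagrange_iff_defect_eq0, curvature_equation_iff_defect_eq0; reflexivity. Qed.
End AlongCurve.

Theorem proposition3p1 (alpha a b : R) (u v : R -> R) :
  alpha <> 0 ->
  a < b ->
  (* u, v are twice differentiable on ]a,b[ *)
  (forall t, a < t < b ->
     ex_derive u t /\ ex_derive (Derive u) t /\
     ex_derive v t /\ ex_derive (Derive v) t) ->
  (* gamma avoids N (and stays in the chart 0 < u < pi where xi is defined) *)
  (forall t, a < t < b -> 0 < u t < PI) ->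
  (* gamma is regular *)
  (forall t, a < t < b -> norm3 (vel u v t) <> 0) ->
  (stationary alpha a b u v <->
   forall t, a < t < b ->
     curvature u v t = alpha * dot3 (unit_normal u v t) (xi_along u v t) / dist_N u v t).
Proof.
(* The equivalence also holds for alpha = 0 (geodesics). *)
intros _ _ derivable in_chart regular.
assert (near : forall t (P : R -> Prop), a < t < b -> (forall s, a < s < b -> P s) -> locally t P).
{ intros t P [a_t t_b] HP; apply (locally_interval P t a b); [exact a_t | exact t_b |].
  intros s a_s s_b; apply HP; split; assumption. }
apply forall_in_iff; intros t Ht.
destruct (derivable t Ht) as (_ & ddu & _ & ddv).
apply euler_lagrange_iff_curvature_equation; [| exact ddu | exact ddv | | exact (in_chart t Ht)].
- apply (near t _ Ht); intros s Hs; destruct (derivable s Hs) as (du & _ & dv & _); split; assumption.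
- apply (near t _ Ht); intros s Hs; destruct (derivable s Hs) as (du & _ & dv & _).
  apply sq_speed_pos_of_regular; [exact du | exact dv | exact (regular s Hs)].
Qed.
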